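(* Let $K\ge 1$ and $N\ge 1$ be integers, let $0\le \tau_1<\tau_2<\dots<\tau_K\le 1$, and let $\{w(\tau)\}_{\tau\in[0,1]}\subset\mathbb{R}^p$ be a fixed (non-random) weight trajectory. For each $k$, let $p_{\tau_k}$ be a probability distribution on $X\times Y$ and let $\hat p_{\tau_k}$ be a sample of $N$ pairs $(x,y)$ drawn i.i.d. from $p_{\tau_k}$, the samples for different $k$ being independent. Let $\ell(w;x,y)$ be a loss taking values in $[0,M]$ for some $M>0$. For $r\ge 0$ and each $k$ define the Rademacher complexity $$\mathcal{R}^{(k)}_N(r)=\mathbb{E}_{\hat p\sim p_{\tau_k}^N}\,\mathbb{E}_\sigma\Big[\sup_{w:\ \|w\|_{\mathrm{FR}}\le r}\frac1N\sum_{i=1}^N\sigma^i\,\ell(w;x^i,y^i)\Big],$$ where $\sigma^1,\dots,\sigma^N$ are i.i.d. uniform on $\{-1,1\}$ and $\hat p=\{(x^i,y^i)\}_{i=1}^N$. Set $R=\frac{2}{K}\sum_{k=1}^K\mathcal{R}^{(k)}_N(\|w(\tau_k)\|_{\mathrm{FR}})$. Then for every $\epsilon>R$, $$\Pr\Big\{\frac1K\sum_{k=1}^K\Big(\mathbb{E}_{(x,y)\sim p_{\tau_k}}[\ell(w(\tau_k);x,y)]-\frac1N\sum_{(x,y)\in\hat p_{\tau_k}}\ell(w(\tau_k);x,y)\Big)>\epsilon\Big\}\le \exp\Big\{-\frac{2K}{M^2}\big(\epsilon-R\big)^2\Big\}.$$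
   Context: $\|\cdot\|_{\mathrm{FR}}$ denotes the Fisher-Rao norm of a weight vector, $\|w\|_{\mathrm{FR}}^2=\langle w, g(w)\,w\rangle$, where $g(w)$ is the Fisher Information Matrix of the model $p_w(y\mid x)$: $g_{ij}(w)=\mathbb{E}_{x\sim p(x),\,y\sim p_w(y|x)}[\partial_{w_i}\log p_w(y|x)\,\partial_{w_j}\log p_w(y|x)]$. The supremum in the Rademacher complexity is over all weights in the Fisher-Rao-norm ball of the given radius (assumed measurable). *)

From HB Require Import structures.
From mathcomp Require Import all_boot all_order all_algebra.
From mathcomp Require Import all_classical all_reals all_analysis.
Set Implicit Arguments. Unset Strict Implicit. Unset Printing Implicit Defensive.
Import Order.TTheory GRing.Theory Num.Theory.
Import numFieldNormedType.Exports.
Local Open Scope classical_set_scope.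
Local Open Scope ring_scope.

Section FR.
Context {R : realType} {dX dY : measure_display}
  {X : measurableType dX} {Y : measurableType dY} {p : nat}.

Definition partialw (f : 'rV[R]_p -> R) (i : 'I_p) (w : 'rV[R]_p) : R :=
  'D_(delta_mx 0 i) f w.

(* Fisher information matrix of the model p_w(y|x) = dens w x y (a density
   with respect to the reference measure nu on Y), inputs x ~ px:
   g_ij(w) = E_{x~px, y~p_w(.|x)} [d_i log p_w(y|x) d_j log p_w(y|x)]. *)
Definition fisher (px : probability X R) (nu : {measure set Y -> \bar R})
  (dens : 'rV[R]_p -> X -> Y -> R) (w : 'rV[R]_p) (i j : 'I_p) : R :=
  Rintegral px setT (fun x =>
    Rintegral nu setT (fun y =>
      dens w x y *
      (partialw (fun v => ln (dens v x y)) i w *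
       partialw (fun v => ln (dens v x y)) j w))).

Definition FRnorm px nu dens (w : 'rV[R]_p) : R :=
  Num.sqrt (\sum_(i < p) \sum_(j < p) w 0 i * fisher px nu dens w i j * w 0 j).

Definition rad_inner (N : nat) (normw : 'rV[R]_p -> R)
  (loss : 'rV[R]_p -> X -> Y -> R) (r : R) (s : 'I_N -> (X * Y)%type) : R :=
  (2 ^+ N)^-1 * \sum_(sg : {ffun 'I_N -> bool})
     sup [set (N%:R^-1 * \sum_(i < N) (-1) ^+ sg i * loss w (s i).1 (s i).2)
         | w in [set w | normw w <= r]].

(* Rademacher complexity R_N(r) = E_{phat ~ dist^N} E_sigma [sup ...], where
   the sample phat is realised as a random vector S on a probability space
   (Omega, P) whose law is dist^N. *)
Definition rademacher {d} {Omega : measurableType d} (P : probability Omega R)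
  (N : nat) (S : Omega -> 'I_N -> (X * Y)%type) (normw : 'rV[R]_p -> R)
  (loss : 'rV[R]_p -> X -> Y -> R) (r : R) : R :=
  Rintegral P setT (fun om => rad_inner normw loss r (S om)).

End FR.

From HB Require Import structures.
From mathcomp Require Import all_boot all_order all_algebra.
From mathcomp Require Import all_classical all_reals all_analysis.
From mathcomp Require Import ring lra measurable_realfun.
Set Implicit Arguments. Unset Strict Implicit. Unset Printing Implicit Defensive.
Import Order.TTheory GRing.Theory Num.Theory.
Import numFieldNormedType.Exports.
Local Open Scope classical_set_scope.
Local Open Scope ring_scope.

(* The deviation bound of Theorem 1 follows from Hoeffding's inequality alone.
   The averaged deviation equals (K N)^-1 times the sum, over the K N pairs
   (k, i), of the centred losses E[l_k] - l_k(Z k i), which are independent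
   and take values in an interval of length M; Hoeffding's inequality bounds
   its tail above eps by exp(-2 K N eps^2 / M^2).  Since the Rademacher
   complexities are non-negative, 0 < eps - R <= eps, and this is at most
   exp(-2 K (eps - R)^2 / M^2).

   Independence is only available on measurable rectangles, so Hoeffding's
   inequality is proved by discretisation:
   - Hoeffding's lemma for finitely supported laws (two-point case by a
     mean-value argument, general case by convexity of exp);
   - discretisation of a [0, M]-valued observable into n cells of width M/n;
   - a Chernoff bound for events controlled by independent finite partitions;
   - Hoeffding's inequality, first with an error M/n per term, then exactly
     by letting n grow, with the Chernoff parameter optimised. *)

Section hoeffding_lemma.
Context {R : realType}.
Implicit Types (q c h v x y M : R).

(* tanh (y/2) <= y/2 for y >= 0, in the form exp(y) (2 - y) <= 2 + y. *)
Lemma expR_mul2B_le y : 0 <= y -> expR y * (2 - y) <= 2 + y.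
Proof.
move=> y0; pose phi x := 2 + x - expR x * (2 - x).
have phi' x : is_derive x 1 phi (1 - expR x * (1 - x)).
  by apply: is_derive_eq; rewrite /GRing.scale /=; lra.
have phic : {within `[0, y], continuous phi}.
  by apply: derivable_within_continuous => x _; exact: ex_derive.
have [c _ phiE] := MVT_segment y0 (fun x _ => phi' x) phic.
suff : 0 <= phi y - phi 0 by rewrite /phi expR0; lra.
rewrite phiE mulr_ge0 ?subr0 // subr_ge0.
have e1 := expR_ge1Dx (- c); have ec : expR c * expR (- c) = 1.
  by rewrite -expRD subrr expR0.
have := expR_gt0 c; nra.
Qed.

(* The variance-type bound q (1-q) (e^x - 1) <= x/4 ((1-q) e^x + q) for x >= 0:
   it bounds the derivative of the log-moment-generating function below. *)
Lemma bernoulli_deriv_bound q x : 0 <= q <= 1 -> 0 <= x ->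
  q * (1 - q) * (expR x - 1) <= x / 4 * ((1 - q) * expR x + q).
Proof.
move=> /andP[q0 q1] x0; set E := expR (x / 2).
have EE : expR x = E * E by rewrite /E -expRD -splitr.
have E1 : 1 <= E by rewrite -expR0 ler_expR divr_ge0.
have tanhE : E - 1 <= x / 4 * (E + 1).
  by have := expR_mul2B_le (divr_ge0 x0 (ler0n _ 2)); rewrite -/E; lra.
have sq : q * (1 - q) * (E + 1) ^+ 2 <= (1 - q) * (E * E) + q.
  have := sqr_ge0 ((1 - q) * E - q); nra.
have qq : 0 <= q * (1 - q) * (E + 1) by rewrite !mulr_ge0 //; lra.
rewrite EE; have x4 : 0 <= x / 4 by rewrite divr_ge0.
nra.
Qed.

Lemma ln_bernoulli_mgf_le q h : 0 <= q <= 1 -> 0 <= h ->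
  ln ((1 - q) * expR h + q) <= (1 - q) * h + h ^+ 2 / 8.
Proof.
move=> q01 h0; have /andP[q0 q1] := q01.
pose D x := (1 - q) * expR x + q.
have D0 x : 0 < D x.
  rewrite /D; have ex := expR_gt0 x.
  have [->|qn0] := eqVneq q 0; first by rewrite subr0 mul1r addr0.
  have : 0 < q by rewrite lt_neqAle eq_sym qn0.
  nra.
pose g x := ln (D x) - (1 - q) * x - x ^+ 2 / 8.
pose dg x := (D x)^-1 * ((1 - q) * expR x) - (1 - q) - x / 4.
have g' x : is_derive x 1 g (dg x).
  have lnD : is_derive x 1 (@ln R \o D) ((D x)^-1 * ((1 - q) * expR x)).
    have D' : is_derive x 1 D ((1 - q) * expR x).
      by apply: is_derive_eq; rewrite /GRing.scale /=; ring.
    exact: is_derive1_comp (is_derive1_ln (D0 x)) D'.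
  apply: is_derive_eq; rewrite /dg /GRing.scale /=; field; exact/lt0r_neq0.
have gc : {within `[0, h], continuous g}.
  by apply: derivable_within_continuous => x _; exact: ex_derive.
have [c /[!in_itv]/andP[c0 _] gE] := MVT_segment h0 (fun x _ => g' x) gc.
have dgc : dg c <= 0.
  rewrite /dg subr_le0 -subr_le0.
  have -> : (D c)^-1 * ((1 - q) * expR c) - (1 - q) =
      (D c)^-1 * (q * (1 - q) * (expR c - 1)).
    by rewrite /D; field; exact: lt0r_neq0 (D0 c).
  rewrite subr_le0 ler_pdivrMl // mulrC.
  by have := bernoulli_deriv_bound q01 c0; rewrite /D; lra.
have : g h - g 0 <= 0 by rewrite gE mulr_le0_ge0 // subr0.
by rewrite /g /D expR0 mulr1 subrK ln1; lra.
Qed.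

Lemma bernoulli_mgf_le q h : 0 <= q <= 1 -> 0 <= h ->
  1 - q + q * expR (- h) <= expR (h ^+ 2 / 8 - q * h).
Proof.
move=> q01 h0; have /andP[q0 q1] := q01.
have Dpos : 0 < (1 - q) * expR h + q.
  have e1 : 1 <= expR h by rewrite -expR0 ler_expR.
  nra.
have -> : 1 - q + q * expR (- h) = expR (- h) * ((1 - q) * expR h + q).
  by rewrite mulrDr mulrCA -expRD addNr expR0; ring.
rewrite -[X in _ * X]lnK ?posrE // -expRD ler_expR.
by have := ln_bernoulli_mgf_le q01 h0; lra.
Qed.

(* Convexity of exp on the chord [-(c M), 0]: the exponential lies below the
   secant, which reduces Hoeffding's lemma to the two-point case. *)
Lemma expR_chord c M v : 0 < M -> 0 <= v <= M ->
  expR (- (c * v)) <= 1 - v / M + v / M * expR (- (c * M)).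
Proof.
move=> M0 /andP[v0 vM].
have t0 : 0 <= v / M by rewrite divr_ge0 // ltW.
have t1 : v / M <= 1 by rewrite ler_pdivrMr // mul1r.
have := convex_expR (Itv01 t0 t1) (- (c * M)) 0.
rewrite !convRE /= expR0 mulr0 addr0 mulr1.
have -> : v / M * - (c * M) = - (c * v) by field; exact: lt0r_neq0.
by rewrite addrC.
Qed.

Lemma hoeffding_lemma_fin (I : finType) (p v : I -> R) M c : 0 < M -> 0 <= c ->
  (forall i, 0 <= p i) -> \sum_i p i = 1 -> (forall i, 0 <= v i <= M) ->
  \sum_i p i * expR (c * (\sum_j p j * v j - v i)) <= expR (c ^+ 2 * M ^+ 2 / 8).
Proof.
move=> M0 c0 p0 p1 vM; set mean := \sum_j p j * v j.
have mean_range : 0 <= mean <= M.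
  apply/andP; split; first by apply: sumr_ge0 => i _; rewrite mulr_ge0 //; case/andP: (vM i).
  rewrite -[leRHS]mul1r -p1 mulr_suml; apply: ler_sum => i _.
  by rewrite ler_wpM2l //; case/andP: (vM i).
set q := mean / M; set h := c * M.
have q01 : 0 <= q <= 1.
  by case/andP: mean_range => m0 mM; rewrite /q divr_ge0 ?(ltW M0) //= ler_pdivrMr // mul1r.
have meanE : c * mean = q * h by rewrite /q /h; field; exact: lt0r_neq0.
have chord : \sum_i p i * expR (- (c * v i)) <= 1 - q + q * expR (- h).
  apply: (@le_trans _ _ (\sum_i p i * (1 - v i / M + v i / M * expR (- h)))).
    by apply: ler_sum => i _; rewrite ler_wpM2l // expR_chord.
  have -> : \sum_i p i * (1 - v i / M + v i / M * expR (- h)) =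
      \sum_i p i - q + q * expR (- h).
    rewrite /q /mean !mulr_suml -sumrB -big_split /=.
    by apply: eq_bigr => i _; ring.
  by rewrite p1.
have -> : \sum_i p i * expR (c * (mean - v i)) =
    expR (c * mean) * \sum_i p i * expR (- (c * v i)).
  by rewrite mulr_sumr; apply: eq_bigr => i _; rewrite mulrCA -expRD; congr (_ * expR _); ring.
apply: (le_trans (ler_wpM2l (ltW (expR_gt0 _)) chord)).
have bern := bernoulli_mgf_le q01 (mulr_ge0 c0 (ltW M0)).
rewrite meanE mulrC (le_trans (ler_wpM2r (ltW (expR_gt0 _)) bern)) //.
by rewrite -expRD subrK /h exprMn.
Qed.
End hoeffding_lemma.

(* Discretisation of a bounded observable: [0, M] is cut into n cells of width
   M/n (plus one more cell catching the value M), and l is replaced by the left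
   endpoint of its cell.  This turns any law of l into a finitely supported one,
   to which the finite Hoeffding lemma applies, at the cost of an error M/n. *)
Section discretisation.
Context {R : realType} {dT : measure_display} {T : measurableType dT}.
Variables (Q : probability T R) (l : T -> R) (M : R) (n : nat).
Hypotheses (M0 : 0 < M) (n0 : (0 < n)%N) (ml : measurable_fun setT l)
  (lM : forall z, 0 <= l z <= M).

Definition cell_width : R := M / n%:R.
Definition cell_lo (m : 'I_n.+1) : R := m%:R * cell_width.
Definition cell (m : 'I_n.+1) : set T := [set z | cell_lo m <= l z < cell_lo m + cell_width].

Let width_gt0 : 0 < cell_width.
Proof. by rewrite divr_gt0 // ltr0n. Qed.

Let width_mul : n%:R * cell_width = M.
Proof. by rewrite /cell_width mulrC mulfVK // pnatr_eq0 -lt0n. Qed.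

Let cell_loS m : cell_lo m + cell_width = m.+1%:R * cell_width.
Proof. by rewrite /cell_lo -natr1 mulrDl mul1r. Qed.

Lemma cell_measurable m : measurable (cell m).
Proof.
have -> : cell m = setT `&` l @^-1` [set` `[cell_lo m, cell_lo m + cell_width[%R].
  by apply/seteqP; split => z /=; rewrite in_itv /=; [move=> ?; split | case].
exact: ml (measurable_itv _).
Qed.

Lemma cell_lo_range m : 0 <= cell_lo m <= M.
Proof.
rewrite /cell_lo mulr_ge0 ?(ltW width_gt0) //=.
by rewrite -[leRHS]width_mul ler_wpM2r ?(ltW width_gt0) // ler_nat -ltnS.
Qed.

Lemma cell_cover z : exists m, cell m z.
Proof.
set y := l z / cell_width.
have y0 : 0 <= y by rewrite divr_ge0 ?(ltW width_gt0) //; case/andP: (lM z).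
have yn : (Num.truncn y < n.+1)%N.
  rewrite ltnS truncn_le_nat ltr_pdivrMr // -natr1 mulrDl mul1r width_mul.
  by case/andP: (lM z) => _ lzM; rewrite ltr_pwDr.
exists (Ordinal yn); rewrite /cell /= cell_loS /cell_lo /=.
have lE : l z = y * cell_width by rewrite /y mulfVK // gt_eqF.
by rewrite lE ler_pM2r // ltr_pM2r // truncn_itv.
Qed.

Lemma cell_uniq m m' z : cell m z -> cell m' z -> m = m'.
Proof.
rewrite /cell /= !cell_loS /cell_lo => /andP[a1 a2] /andP[b1 b2].
have h1 : m%:R < m'.+1%:R :> R by rewrite -(ltr_pM2r width_gt0); exact: le_lt_trans a1 b2.
have h2 : m'%:R < m.+1%:R :> R by rewrite -(ltr_pM2r width_gt0); exact: le_lt_trans b1 a2.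
rewrite ltr_nat ltnS in h1; rewrite ltr_nat ltnS in h2.
by apply: val_inj; apply/eqP; rewrite eqn_leq h1 h2.
Qed.

Let cells_partition : \big[setU/set0]_(m < n.+1) cell m = setT.
Proof.
apply/seteqP; split => // z _; have [m zm] := cell_cover z.
by rewrite -bigcup_seq; exists m => //=; exact: mem_index_enum.
Qed.

Let cells_trivI : trivIset setT cell.
Proof. by move=> i j _ _ [z [zi zj]]; exact: cell_uniq zi zj. Qed.

Let cell_fineK m : (fine (Q (cell m)))%:E = Q (cell m).
Proof. by rewrite fineK // fin_num_measure //; exact: cell_measurable. Qed.

Lemma cell_mass_sum : \sum_m fine (Q (cell m)) = 1.
Proof.
apply: EFin_inj; rewrite -sumEFin; under eq_bigr do rewrite cell_fineK.
rewrite -measure_bigsetU_ord ?cells_partition; first exact: probability_setT.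
- exact: cell_measurable.
- exact: cells_trivI.
Qed.

Lemma mean_le_discretised :
  Rintegral Q setT l <= \sum_m fine (Q (cell m)) * cell_lo m + cell_width.
Proof.
have l0 z : (0 <= (l z)%:E)%E by rewrite lee_fin; case/andP: (lM z).
have mlE := proj2 (measurable_EFinP setT l) ml.
have int_le : (\int[Q]_z (l z)%:E <=
    (\sum_m fine (Q (cell m)) * (cell_lo m + cell_width))%:E)%E.
  rewrite -[in X in (X <= _)%E]cells_partition ge0_integral_bigsetU //.
  2: exact: cell_measurable.
  2: exact: index_enum_uniq.
  2: by move=> i j _ _ [z [zi zj]]; exact: cell_uniq zi zj.
  2: exact: measurable_funTS.
  rewrite -sumEFin; apply: lee_sum => m _.
  apply: (@le_trans _ _ (\int[Q]_(z in cell m) (cst (cell_lo m + cell_width)%:E) z)%E).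
    apply: ge0_le_integral => //; first exact: cell_measurable.
    - exact: measurable_funS mlE.
    - by move=> z /andP[_ /ltW].
  rewrite integral_cst; last exact: cell_measurable.
  by rewrite -[X in (_ * X <= _)%E]cell_fineK -EFinM mulrC.
have : Rintegral Q setT l <= \sum_m fine (Q (cell m)) * (cell_lo m + cell_width).
  rewrite /Rintegral -lee_fin fineK // ge0_fin_numE ?integral_ge0 //.
  by apply: le_lt_trans int_le _; rewrite ltry.
under [in X in _ <= X -> _]eq_bigr do rewrite mulrDr.
by rewrite big_split /= -mulr_suml cell_mass_sum mul1r.
Qed.

Lemma discretised_hoeffding_lemma (c : R) : 0 <= c ->
  \sum_m expR (c * (Rintegral Q setT l - cell_lo m)) * fine (Q (cell m)) <=
  expR (c * cell_width + c ^+ 2 * M ^+ 2 / 8).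
Proof.
move=> c0; set mu := Rintegral Q setT l.
set nu := \sum_m fine (Q (cell m)) * cell_lo m.
have mu_nu : mu - nu <= cell_width.
  by have := mean_le_discretised; rewrite -/mu -/nu; lra.
have := @hoeffding_lemma_fin R _ (fun m => fine (Q (cell m))) cell_lo _ _ M0 c0
  (fun m => fine_ge0 (measure_ge0 _ _)) cell_mass_sum cell_lo_range.
rewrite -/nu => hoeff.
have -> : \sum_m expR (c * (mu - cell_lo m)) * fine (Q (cell m)) =
    expR (c * (mu - nu)) * \sum_m fine (Q (cell m)) * expR (c * (nu - cell_lo m)).
  rewrite mulr_sumr; apply: eq_bigr => m _; rewrite mulrCA -expRD mulrC.
  by congr (_ * expR _); ring.
rewrite expRD ler_pM ?expR_ge0 ?ler_expR ?ler_wpM2l //.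
by apply: sumr_ge0 => m _; rewrite mulr_ge0 ?expR_ge0 ?fine_ge0 ?measure_ge0.
Qed.

End discretisation.

Section chernoff_on_cells.
Context {R : realType} {d : measure_display} {Omega : measurableType d}.
Variable P : probability Omega R.

Lemma union_bound (I : eqType) (s : seq I) (F : I -> set Omega) (A : set Omega) :
  (forall i, measurable (F i)) -> measurable A ->
  A `<=` [set om | exists2 i, i \in s & F i om] ->
  (P A <= \sum_(i <- s) P (F i))%E.
Proof.
move=> mF; elim: s A => [|i s IH] A mA sA.
  by rewrite big_nil (_ : A = set0) ?measure0 //; apply/seteqP; split => // x /sA [].
rewrite big_cons; have mAD := measurableD mA (mF i).
have AFD : A `<=` F i `|` (A `\` F i).
  by move=> x Ax; have [Fx|nFx] := pselect (F i x); [left | right].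
apply: (le_trans (le_measure _ _ _ AFD)); rewrite ?inE //; first exact: measurableU.
apply: (le_trans (measureU2 _ (mF i) mAD)); apply: leeD => //.
apply: IH => // x [/sA [j]]; rewrite inE => /orP[/eqP -> //|js Fjx] nFx.
by exists j.
Qed.

Variables (J : finType) (n : nat) (B : J -> 'I_n -> set Omega)
  (a : J -> 'I_n -> R) (E : set Omega) (eps lam : R).
Hypotheses (mB : forall j m, measurable (B j m)) (mE : measurable E)
  (B_indep : forall f : {ffun J -> 'I_n},
     fine (P [set om | forall j, B j (f j) om]) = \prod_j fine (P (B j (f j))))
  (B_cover : forall om j, exists m, B j m om)
  (E_score : forall om (f : {ffun J -> 'I_n}), E om ->
     (forall j, B j (f j) om) -> eps < \sum_j a j (f j))
  (lam0 : 0 <= lam).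

Lemma chernoff_on_cells : fine (P E) <=
  expR (- (lam * eps)) * \prod_j \sum_m expR (lam * a j m) * fine (P (B j m)).
Proof.
pose box (f : {ffun J -> 'I_n}) := [set om | forall j, B j (f j) om].
have mbox f : measurable (box f).
  rewrite (_ : box f = \bigcap_(j in [set: J]) B j (f j)).
    by apply: fin_bigcap_measurable => //; exact: finite_finset.
  by apply/seteqP; split => om H j //; apply: H.
pose score (f : {ffun J -> 'I_n}) := \sum_j a j (f j).
pose G f := if eps < score f then box f else set0.
have mG f : measurable (G f) by rewrite /G; case: ifP.
have PE_le : fine (P E) <= \sum_f fine (P (G f)).
  rewrite -lee_fin -sumEFin fineK ?fin_num_measure //.
  under eq_bigr do rewrite fineK ?fin_num_measure //.
  apply: union_bound => // om Eom.
  pose f := [ffun j => sval (cid (B_cover om j))].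
  have bf : box f om by move=> j; rewrite /f ffunE; exact: svalP (cid (B_cover om j)).
  by exists f; [rewrite mem_index_enum | rewrite /G (E_score Eom bf)].
(* Markov: 1_{score > eps} <= exp(lam (score - eps)). *)
apply: (le_trans PE_le).
apply: (@le_trans _ _ (\sum_f expR (lam * (score f - eps)) * \prod_j fine (P (B j (f j))))).
  apply: ler_sum => f _; rewrite -B_indep /G; case: ifP => [eps_lt|_].
    rewrite -[leLHS]mul1r ler_wpM2r ?fine_ge0 ?measure_ge0 //.
    by rewrite -expR0 ler_expR mulr_ge0 // subr_ge0 ltW.
  by rewrite measure0 mulr_ge0 ?expR_ge0 ?fine_ge0 ?measure_ge0.
rewrite bigA_distr_bigA mulr_sumr le_eqVlt; apply/orP; left; apply/eqP.
apply: eq_bigr => f _; rewrite big_split /= -expR_sum -mulr_sumr /score mulrBr expRD.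
by ring.
Qed.

End chernoff_on_cells.

Lemma le_expR_vanishing_error {R : realType} (x A B : R) : 0 <= B ->
  (forall n : nat, (0 < n)%N -> x <= expR (A + B / n%:R)) -> x <= expR A.
Proof.
move=> B0 xle; rewrite leNgt; apply/negP => Ax.
have x0 : 0 < x by apply: le_lt_trans Ax; exact: expR_ge0.
set e := ln x - A.
have e0 : 0 < e by rewrite /e subr_gt0 -ltr_expR lnK // posrE.
set n := (Num.truncn (B / e)).+1.
have Bn : B / n%:R < e.
  by rewrite ltr_pdivrMr ?ltr0n // mulrC -ltr_pdivrMr // truncnS_gt.
have := xle n isT; rewrite leNgt => /negP; apply.
by rewrite -[ltRHS]lnK ?posrE // ltr_expR; rewrite /e in Bn; lra.
Qed.

Section hoeffding.
Context {R : realType} {d dT : measure_display}.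
Context {Omega : measurableType d} {T : measurableType dT}.
Variables (P : probability Omega R) (J : finType) (Q : J -> probability T R).
Variables (Z : J -> Omega -> T) (l : J -> T -> R) (M : R).
Hypotheses (J0 : (0 < #|J|)%N) (M0 : 0 < M)
  (mZ : forall j, measurable_fun setT (Z j))
  (Z_law : forall j A, measurable A -> P (Z j @^-1` A) = Q j A)
  (Z_indep : forall A : J -> set T, (forall j, measurable (A j)) ->
     fine (P [set om | forall j, A j (Z j om)]) = \prod_j fine (P (Z j @^-1` A j)))
  (ml : forall j, measurable_fun setT (l j))
  (lM : forall j z, 0 <= l j z <= M).

Definition deviation (om : Omega) : R :=
  \sum_j (Rintegral (Q j) setT (l j) - l j (Z j om)).

Lemma deviation_measurable : measurable_fun setT deviation.
Proof.
apply: measurable_sum => j; apply: measurable_funB; first exact: measurable_cst.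
exact: measurableT_comp (ml j) (mZ j).
Qed.

Lemma large_deviation_measurable (s : R) : measurable [set om | s < deviation om].
Proof.
rewrite (_ : [set om | _] = setT `&` deviation @^-1` [set` `]s, +oo[%R]).
  exact: deviation_measurable (measurable_itv _).
by apply/seteqP; split => om /=; rewrite in_itv /= andbT; [move=> ?; split | case].
Qed.

Lemma chernoff_discretised (s lam : R) (n : nat) : 0 <= lam -> (0 < n)%N ->
  fine (P [set om | s < deviation om]) <=
  expR (- (lam * s) + #|J|%:R * (lam * (M / n%:R) + lam ^+ 2 * M ^+ 2 / 8)).
Proof.
move=> lam0 n0.
pose B j (m : 'I_n.+1) := Z j @^-1` cell (l j) M m.
pose a j (m : 'I_n.+1) := Rintegral (Q j) setT (l j) - cell_lo M m.
have mcell j (m : 'I_n.+1) : measurable (cell (l j) M m) by exact: cell_measurable.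
have mB j (m : 'I_n.+1) : measurable (B j m) by rewrite -[B j m]setTI; exact: mZ.
have B_indep (f : {ffun J -> 'I_n.+1}) :
    fine (P [set om | forall j, B j (f j) om]) = \prod_j fine (P (B j (f j))).
  exact: Z_indep (fun j => mcell j (f j)).
have B_cover om j : exists m, B j m om by exact: cell_cover.
have score om (f : {ffun J -> 'I_n.+1}) : s < deviation om ->
    (forall j, B j (f j) om) -> s < \sum_j a j (f j).
  move=> dev_gt Bf; apply: (lt_le_trans dev_gt); apply: ler_sum => j _.
  by rewrite lerD2l lerN2; case/andP: (Bf j).
apply: (le_trans (chernoff_on_cells mB (large_deviation_measurable s)
  B_indep B_cover score lam0)).
have factor j : \sum_m expR (lam * a j m) * fine (P (B j m)) <=
    expR (lam * (M / n%:R) + lam ^+ 2 * M ^+ 2 / 8).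
  under eq_bigr do rewrite /B Z_law //.
  exact: discretised_hoeffding_lemma.
rewrite expRD expRM_natl -prodr_const ler_wpM2l ?expR_ge0 //.
apply: ler_prod => j _; rewrite factor andbT.
by apply: sumr_ge0 => m _; rewrite mulr_ge0 ?expR_ge0 ?fine_ge0 ?measure_ge0.
Qed.

(* Letting the discretisation step go to zero. *)
Lemma chernoff_hoeffding (s lam : R) : 0 <= lam ->
  fine (P [set om | s < deviation om]) <=
  expR (- (lam * s) + #|J|%:R * (lam ^+ 2 * M ^+ 2 / 8)).
Proof.
move=> lam0; apply: (@le_expR_vanishing_error _ _ _ (#|J|%:R * lam * M)).
  by rewrite !mulr_ge0 ?ler0n // ltW.
move=> n n0; rewrite (le_trans (chernoff_discretised s lam0 n0)) // ler_expR.
rewrite le_eqVlt; apply/orP; left; apply/eqP; ring.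
Qed.

(* Optimising the Chernoff parameter at lam = 4 s / (#|J| M^2). *)
Theorem hoeffding_inequality (s : R) : 0 <= s ->
  (P [set om | (s < deviation om)%R] <=
   (expR (- (2 * s ^+ 2) / (#|J|%:R * M ^+ 2)))%:E)%E.
Proof.
move=> s0; have J0' : 0 < #|J|%:R :> R by rewrite ltr0n.
pose lam := 4 * s / (#|J|%:R * M ^+ 2).
have lam0 : 0 <= lam.
  by apply: divr_ge0; [lra | exact: mulr_ge0 (ltW J0') (sqr_ge0 M)].
rewrite -(fineK (fin_num_measure _ _ (large_deviation_measurable s))) lee_fin.
rewrite (le_trans (chernoff_hoeffding s lam0)) // le_eqVlt; apply/orP; left.
apply/eqP; congr expR; rewrite /lam; field.
by rewrite !gt_eqF.
Qed.

End hoeffding.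

(* Rademacher complexities of a non-empty class of bounded losses are
   non-negative, so the complexity term only weakens the deviation bound. *)
Section rademacher_nonneg.
Context {R : realType} {dX dY : measure_display}.
Context {X : measurableType dX} {Y : measurableType dY} {p : nat}.
Variables (N : nat) (normw : 'rV[R]_p -> R) (loss : 'rV[R]_p -> X -> Y -> R).
Variables (M r : R) (w0 : 'rV[R]_p).
Hypotheses (w0r : normw w0 <= r) (lM : forall w x y, 0 <= loss w x y <= M).

Let corr (s : 'I_N -> (X * Y)%type) (sg : {ffun 'I_N -> bool}) (w : 'rV[R]_p) : R :=
  N%:R^-1 * \sum_(i < N) (-1) ^+ sg i * loss w (s i).1 (s i).2.

(* Flipping all signs negates the correlation, so it averages to zero. *)
Let sum_corr_eq0 s w : \sum_sg corr s sg w = 0.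
Proof.
have flip_inj : injective (fun sg : {ffun 'I_N -> bool} => [ffun i => ~~ sg i]).
  move=> f g /ffunP fg; apply/ffunP => i; have := fg i; rewrite !ffunE.
  by case: (f i); case: (g i).
have : \sum_sg corr s sg w = - \sum_sg corr s sg w.
  rewrite [in LHS](reindex_inj flip_inj) -sumrN; apply: eq_bigr => sg _.
  rewrite /corr -mulrN -sumrN; congr (_ * _); apply: eq_bigr => i _.
  by rewrite ffunE; case: (sg i); rewrite ?expr1 ?expr0 /=; lra.
lra.
Qed.

Lemma rad_inner_ge0 (s : 'I_N -> (X * Y)%type) : 0 <= rad_inner normw loss r s.
Proof.
rewrite /rad_inner mulr_ge0 ?invr_ge0 ?exprn_ge0 //.
have ub sg : has_ubound [set corr s sg w | w in [set w | normw w <= r]].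
  exists (N%:R^-1 * \sum_(i < N) M) => _ [w _ <-].
  rewrite ler_wpM2l ?invr_ge0 //; apply: ler_sum => i _.
  have /andP[l0 l1] := lM w (s i).1 (s i).2.
  by case: (sg i); rewrite ?expr1 ?expr0 ?mulN1r ?mul1r //; lra.
apply: (@le_trans _ _ (\sum_sg corr s sg w0)); first by rewrite sum_corr_eq0.
by apply: ler_sum => sg _; apply: ub_le_sup (ub sg) _ _; exists w0.
Qed.

Lemma rademacher_ge0 {d} {Omega : measurableType d} (P : probability Omega R)
    (S : Omega -> 'I_N -> (X * Y)%type) :
  0 <= rademacher P S normw loss r.
Proof. by apply: Rintegral_ge0 => om _; exact: rad_inner_ge0. Qed.

End rademacher_nonneg.

Section multitask_hoeffding.
Context {R : realType} {d dT : measure_display}.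
Context {Omega : measurableType d} {T : measurableType dT}.
Variables (P : probability Omega R) (K N : nat) (Q : 'I_K -> probability T R).
Variables (Z : 'I_K -> 'I_N -> Omega -> T) (l : 'I_K -> T -> R) (M : R).
Hypotheses (K0 : (0 < K)%N) (N0 : (0 < N)%N) (M0 : 0 < M)
  (mZ : forall k i, measurable_fun setT (Z k i))
  (Z_law : forall k i A, measurable A -> P (Z k i @^-1` A) = Q k A)
  (Z_indep : forall A : 'I_K -> 'I_N -> set T, (forall k i, measurable (A k i)) ->
     fine (P [set om | forall k i, A k i (Z k i om)]) =
     \prod_(k < K) \prod_(i < N) fine (P (Z k i @^-1` A k i)))
  (ml : forall k, measurable_fun setT (l k))
  (lM : forall k z, 0 <= l k z <= M).

Let Zp (j : 'I_K * 'I_N) : Omega -> T := Z j.1 j.2.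
Let Qp (j : 'I_K * 'I_N) : probability T R := Q j.1.
Let lp (j : 'I_K * 'I_N) : T -> R := l j.1.

Let Zp_indep (A : 'I_K * 'I_N -> set T) : (forall j, measurable (A j)) ->
  fine (P [set om | forall j, A j (Zp j om)]) = \prod_j fine (P (Zp j @^-1` A j)).
Proof.
move=> mA; have -> : [set om | forall j, A j (Zp j om)] =
    [set om | forall k i, A (k, i) (Z k i om)].
  by apply/seteqP; split => om H => [k i|[k i]]; exact: H.
rewrite (Z_indep (A := fun k i => A (k, i))) => [|k i]; last exact: mA.
by rewrite pair_bigA; apply: eq_bigr => -[k i].
Qed.

Let average_gapE om :
  K%:R^-1 * \sum_(k < K) (Rintegral (Q k) setT (l k) -
    N%:R^-1 * \sum_(i < N) l k (Z k i om)) =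
  (K%:R * N%:R)^-1 * deviation Qp Zp lp om.
Proof.
rewrite (_ : deviation _ _ _ om = \sum_(k < K) \sum_(i < N)
    (Rintegral (Q k) setT (l k) - l k (Z k i om))); last by rewrite pair_bigA.
rewrite invfM -mulrA; congr (_ * _); rewrite mulr_sumr; apply: eq_bigr => k _.
rewrite sumrB sumr_const card_ord -mulr_natr; field.
by rewrite pnatr_eq0 -lt0n.
Qed.

Lemma multitask_hoeffding (eps : R) : 0 <= eps ->
  (P [set om | (eps < K%:R^-1 * \sum_(k < K) (Rintegral (Q k) setT (l k) -
      N%:R^-1 * \sum_(i < N) l k (Z k i om)))%R] <=
   (expR (- (2 * K%:R * N%:R / M ^+ 2) * eps ^+ 2))%:E)%E.
Proof.
move=> eps0; have KN0 : 0 < K%:R * N%:R :> R by rewrite mulr_gt0 ?ltr0n.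
have cardJ : #|{: 'I_K * 'I_N}| = (K * N)%N by rewrite card_prod !card_ord.
have J0 : (0 < #|{: 'I_K * 'I_N}|)%N by rewrite cardJ muln_gt0 K0.
rewrite (_ : [set om | _] = [set om | (K%:R * N%:R * eps < deviation Qp Zp lp om)%R]).
  apply: le_trans (hoeffding_inequality J0 M0 (fun j => mZ j.1 j.2)
    (fun j => Z_law j.1 j.2) Zp_indep (fun j => ml j.1) (fun j => lM j.1)
    (mulr_ge0 (ltW KN0) eps0)) _.
  rewrite cardJ natrM lee_fin le_eqVlt; apply/orP; left; apply/eqP.
  by congr expR; field; rewrite ?mulf_neq0 ?gt_eqF ?ltr0n.
by apply/seteqP; split => om /=; rewrite average_gapE ltr_pdivlMl.
Qed.

End multitask_hoeffding.

Theorem mainTheorem1 (R : realType) (d dX dY : measure_display)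
  (Omega : measurableType d) (X : measurableType dX) (Y : measurableType dY)
  (P : probability Omega R) (p K N : nat)
  (* the model p_w(y|x) (density w.r.t. nu) and input law p(x) defining ||.||_FR *)
  (px : probability X R) (nu : {measure set Y -> \bar R})
  (dens : 'rV[R]_p -> X -> Y -> R)
  (tau : 'I_K -> R) (wt : R -> 'rV[R]_p)
  (dist : R -> probability (X * Y)%type R)
  (Z : 'I_K -> 'I_N -> Omega -> (X * Y)%type)
  (loss : 'rV[R]_p -> X -> Y -> R) (M eps : R) :
  (0 < K)%N -> (0 < N)%N ->
  (* the model is a conditional density *)
  (forall w x y, 0 < dens w x y) ->
  (forall w x, (\int[nu]_y (dens w x y)%:E = 1)%E) ->
  (* 0 <= tau_1 < ... < tau_K <= 1 *)
  (forall k : 'I_K, 0 <= tau k <= 1) ->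
  (forall k l : 'I_K, (k < l)%N -> tau k < tau l) ->
  (* samples: Z k i is the i-th pair of the sample for task k *)
  (forall k i, measurable_fun setT (Z k i)) ->
  (forall k i A, measurable A -> P (Z k i @^-1` A) = dist (tau k) A) ->
  (forall A : 'I_K -> 'I_N -> set (X * Y)%type,
     (forall k i, measurable (A k i)) ->
     fine (P [set om | forall k i, A k i (Z k i om)]) =
     \prod_(k < K) \prod_(i < N) fine (P (Z k i @^-1` A k i))) ->
  (* bounded measurable loss *)
  0 < M ->
  (forall w x y, 0 <= loss w x y <= M) ->
  (forall w, measurable_fun setT (fun z : X * Y => loss w z.1 z.2)) ->
  (* measurability of the supremum in the Rademacher complexity *)
  (forall (k : 'I_K) r, 0 <= r ->
     measurable_fun setT
       (fun om => rad_inner (FRnorm px nu dens) loss r (fun i => Z k i om))) ->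
  let Rbound := 2 / K%:R * \sum_(k < K)
      rademacher P (fun om i => Z k i om) (FRnorm px nu dens) loss
        (FRnorm px nu dens (wt (tau k))) in
  Rbound < eps ->
  (P [set om | (K%:R^-1 * \sum_(k < K)
        (Rintegral (dist (tau k)) setT
           (fun z => loss (wt (tau k)) z.1 z.2)
         - N%:R^-1 * \sum_(i < N) loss (wt (tau k)) (Z k i om).1 (Z k i om).2)
        > eps)%R] <=
   (expR (- (2 * K%:R / M ^+ 2) * (eps - Rbound) ^+ 2))%:E)%E.
Proof.
move=> K0 N0 _ _ _ _ mZ lawZ indep M0 lM mloss _ Rbound Reps.
have Rbound0 : 0 <= Rbound.
  rewrite mulr_ge0 ?divr_ge0 ?ler0n //; apply: sumr_ge0 => k _.
  exact: (rademacher_ge0 (normw := FRnorm px nu dens) (w0 := wt (tau k)) (lexx _) lM).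
have t0 : 0 < eps - Rbound by rewrite subr_gt0.
have := multitask_hoeffding (Q := fun k => dist (tau k))
  (l := fun k z => loss (wt (tau k)) z.1 z.2) K0 N0 M0 mZ lawZ indep
  (fun k => mloss _) (fun k z => lM _ z.1 z.2) (ltW (le_lt_trans Rbound0 Reps)).
move/le_trans; apply; rewrite lee_fin ler_expR.
(* Since N >= 1 and 0 < eps - Rbound <= eps, the exponent -2 K N eps^2 / M^2
   beats -2 K (eps - Rbound)^2 / M^2. *)
have N1 : 1 <= N%:R :> R by rewrite ler1n.
have gap_le : (eps - Rbound) ^+ 2 <= N%:R * eps ^+ 2 by nra.
have c0 : 0 <= 2 * K%:R / M ^+ 2 by rewrite divr_ge0 ?sqr_ge0 ?mulr_ge0 ?ler0n.
have := ler_wpM2l c0 gap_le; lra.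
Qed.
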